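(* Let $\mathcal K_{\texttt{SFL}}$ be a nonempty finite set of clients, and for each $\tilde k\in\mathcal K_{\texttt{SFL}}$ let $$a_{\tilde k}=I_{\tilde k}|\mathcal B_{\tilde k}|(F^{\mathrm S}_{\tilde k}+B^{\mathrm S}_{\tilde k})>0,\qquad c_{\tilde k}=\frac{I_{\tilde k}|\mathcal B_{\tilde k}|(F^{\mathrm C}_{\tilde k}+B^{\mathrm C}_{\tilde k})}{f^{\mathrm C}_{\tilde k}}+2\,\frac{I_{\tilde k}|\mathcal B_{\tilde k}|\Lambda_{\tilde k}+|\mathbf w^{\mathrm C}_{\tilde k}|}{r_{\tilde k}}.$$ For $F^{\max}>0$, let $T_\theta=T_\theta(F^{\max})>\max_{\tilde k}c_{\tilde k}$ be defined by the equation $$\sum_{\tilde k\in\mathcal K_{\texttt{SFL}}}\frac{a_{\tilde k}}{T_\theta-c_{\tilde k}}=F^{\max}.$$ Then $T_\theta$ is strictly convex with respect to $F^{\max}$.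
   Context: Split federated learning setting: $F^{\max}$ is the total computing power of the server; for each client $\tilde k$, $I_{\tilde k}$ is the number of local epochs, $|\mathcal B_{\tilde k}|$ the mini-batch size, $F^{\mathrm C}_{\tilde k},B^{\mathrm C}_{\tilde k}\geqslant 0$ and $F^{\mathrm S}_{\tilde k},B^{\mathrm S}_{\tilde k}\geqslant 0$ the per-sample forward/backward computation of the client-side and server-side models, $f^{\mathrm C}_{\tilde k}>0$ the client computing power, $r_{\tilde k}>0$ the data rate, $\Lambda_{\tilde k}\geqslant0$ the per-sample intermediate-result size and $|\mathbf w^{\mathrm C}_{\tilde k}|\geqslant 0$ the client-side model size. $T_\theta$ is the common latency of the clients in $\mathcal K_{\texttt{SFL}}$ when the server's resources are fully allocated among them. *)

From mathcomp Require Import all_boot all_order all_algebra.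
Set Implicit Arguments. Unset Strict Implicit. Unset Printing Implicit Defensive.
Import Order.TTheory GRing.Theory Num.Theory.
Local Open Scope ring_scope.

Definition sfl_a (R : realFieldType) (I Bsz : nat) (FS BS : R) : R :=
  (I%:R * Bsz%:R) * (FS + BS).

Definition sfl_c (R : realFieldType) (I Bsz : nat) (FC BC fC Lam w r : R) : R :=
  (I%:R * Bsz%:R) * (FC + BC) / fC + 2 * ((I%:R * Bsz%:R) * Lam + w) / r.

Definition strictly_convex_pos (R : realFieldType) (f : R -> R) : Prop :=
  forall x y t : R, 0 < x -> 0 < y -> x != y -> 0 < t -> t < 1 ->
    f (t * x + (1 - t) * y) < t * f x + (1 - t) * f y.

From mathcomp Require Import all_boot all_order all_algebra.
From mathcomp Require Import ring.
Set Implicit Arguments. Unset Strict Implicit. Unset Printing Implicit Defensive.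
Import Order.TTheory GRing.Theory Num.Theory.
Local Open Scope ring_scope.

(* G(s) := sum_k a_k / (s - c_k) is decreasing and strictly convex on
   s > max_k c_k, and G (T x) = x.  The inverse of a decreasing strictly convex
   function is strictly convex: with w = t T(x) + (1-t) T(y), convexity gives
   G(w) < t x + (1-t) y = G(T(t x + (1-t) y)), so T(t x + (1-t) y) < w because
   G decreases. *)

Section InverseOfDecreasingConvex.

Variables (R : realFieldType) (D : pred R) (G T : R -> R).

Hypothesis D_convex : {in D &, forall u v t, 0 < t -> t < 1 ->
  t * u + (1 - t) * v \in D}.
Hypothesis G_antitone : {in D &, forall u v, u <= v -> G v <= G u}.
Hypothesis G_strictly_convex : {in D &, forall u v t, u != v -> 0 < t -> t < 1 ->
  G (t * u + (1 - t) * v) < t * G u + (1 - t) * G v}.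
Hypothesis T_in_D : forall x, 0 < x -> T x \in D.
Hypothesis TK : forall x, 0 < x -> G (T x) = x.

Lemma strictly_convex_pos_inverse : strictly_convex_pos T.
Proof.
move=> x y t x0 y0 xy t0 t1.
have z0 : 0 < t * x + (1 - t) * y by rewrite addr_gt0 ?mulr_gt0 ?subr_gt0.
have Txy : T x != T y by apply: contra xy => /eqP Exy; rewrite -(TK x0) -(TK y0) Exy.
have w_D : t * T x + (1 - t) * T y \in D by apply: D_convex; rewrite ?T_in_D.
have := G_strictly_convex (T_in_D x0) (T_in_D y0) Txy t0 t1.
rewrite !TK // => Gw_lt.
rewrite ltNge; apply: contraTN Gw_lt => w_le_Tz.
by rewrite -leNgt -{1}(TK z0) G_antitone // T_in_D.
Qed.

End InverseOfDecreasingConvex.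

Lemma ltr_div_convex (R : realFieldType) (a p q t : R) :
  0 < a -> 0 < p -> 0 < q -> p != q -> 0 < t -> t < 1 ->
  a / (t * p + (1 - t) * q) < t * (a / p) + (1 - t) * (a / q).
Proof.
move=> a0 p0 q0 pq t0 t1.
have t'0 : 0 < 1 - t by rewrite subr_gt0.
have s0 : 0 < t * p + (1 - t) * q by rewrite addr_gt0 ?mulr_gt0.
rewrite -subr_gt0.
have -> : t * (a / p) + (1 - t) * (a / q) - a / (t * p + (1 - t) * q)
  = (a * t * (1 - t) * (p - q) ^+ 2) / (p * q * (t * p + (1 - t) * q)).
  by field; rewrite ?gt_eqF // ?mulr_gt0.
have pq2 : 0 < (p - q) ^+ 2 by rewrite exprn_even_gt0 // subr_eq0.
have num_gt0 : 0 < a * t * (1 - t) * (p - q) ^+ 2.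
  by apply: mulr_gt0 pq2; do 2?apply: mulr_gt0.
by apply: divr_gt0 num_gt0 _; do 2?apply: mulr_gt0.
Qed.

Section ShiftedInverseSum.

Variables (R : realFieldType) (I : finType) (i0 : I) (a c : I -> R).
Hypothesis a_gt0 : forall k, 0 < a k.

Definition shifted_inv_sum (s : R) : R := \sum_k a k / (s - c k).

Definition above_shifts : pred R := [pred s | [forall k, c k < s]].

Lemma above_shiftsP s : reflect (forall k, 0 < s - c k) (s \in above_shifts).
Proof.
by apply: (iffP forallP) => lt_cs k; have := lt_cs k; rewrite subr_gt0.
Qed.

Lemma shift_convex_combination u v t k :
  t * u + (1 - t) * v - c k = t * (u - c k) + (1 - t) * (v - c k).
Proof. by ring. Qed.

Lemma above_shifts_convex : {in above_shifts &, forall u v t, 0 < t -> t < 1 ->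
  t * u + (1 - t) * v \in above_shifts}.
Proof.
move=> u v /above_shiftsP u_gt /above_shiftsP v_gt t t0 t1.
apply/above_shiftsP => k; rewrite shift_convex_combination.
by apply: addr_gt0; apply: mulr_gt0; rewrite ?u_gt ?v_gt ?subr_gt0.
Qed.

Lemma shifted_inv_sum_antitone : {in above_shifts &, forall u v, u <= v ->
  shifted_inv_sum v <= shifted_inv_sum u}.
Proof.
move=> u v /above_shiftsP u_gt _ le_uv; apply: ler_sum => k _.
have le_shift : u - c k <= v - c k by rewrite lerD2r.
have v_gt := lt_le_trans (u_gt k) le_shift.
apply: ler_wpM2l; first exact: ltW.
by rewrite lef_pV2 ?posrE.
Qed.

Lemma shifted_inv_sum_strictly_convex : {in above_shifts &, forall u v t,
  u != v -> 0 < t -> t < 1 ->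
  shifted_inv_sum (t * u + (1 - t) * v)
    < t * shifted_inv_sum u + (1 - t) * shifted_inv_sum v}.
Proof.
move=> u v /above_shiftsP u_gt /above_shiftsP v_gt t uv t0 t1.
rewrite /shifted_inv_sum !mulr_sumr -big_split /=.
apply: ltr_sum; first by apply/hasP; exists i0; rewrite ?mem_index_enum.
move=> k _; rewrite shift_convex_combination ltr_div_convex //.
by rewrite (can_eq (subrK (c k))).
Qed.

End ShiftedInverseSum.

Theorem lemma5 (R : realFieldType) (n : nat)
  (I Bsz : 'I_n.+1 -> nat)
  (FC BC FS BS fC r Lam w : 'I_n.+1 -> R)
  (hFC : forall k, 0 <= FC k) (hBC : forall k, 0 <= BC k)
  (hFS : forall k, 0 <= FS k) (hBS : forall k, 0 <= BS k)
  (hfC : forall k, 0 < fC k) (hr : forall k, 0 < r k)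
  (hLam : forall k, 0 <= Lam k) (hw : forall k, 0 <= w k)
  (ha : forall k, 0 < sfl_a (I k) (Bsz k) (FS k) (BS k))
  (T : R -> R)
  (hTc : forall Fmax, 0 < Fmax -> forall k,
      sfl_c (I k) (Bsz k) (FC k) (BC k) (fC k) (Lam k) (w k) (r k) < T Fmax)
  (hTeq : forall Fmax, 0 < Fmax ->
      \sum_(k < n.+1) sfl_a (I k) (Bsz k) (FS k) (BS k)
         / (T Fmax - sfl_c (I k) (Bsz k) (FC k) (BC k) (fC k) (Lam k) (w k) (r k))
      = Fmax) :
  strictly_convex_pos T.
Proof.
pose a k := sfl_a (I k) (Bsz k) (FS k) (BS k).
pose c k := sfl_c (I k) (Bsz k) (FC k) (BC k) (fC k) (Lam k) (w k) (r k).
apply: (@strictly_convex_pos_inverse _ (above_shifts c) (shifted_inv_sum a c)).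
- exact: above_shifts_convex.
- exact: shifted_inv_sum_antitone.
- exact: (shifted_inv_sum_strictly_convex ord0).
- by move=> x x0; apply/forallP => k; apply: hTc.
- exact: hTeq.
Qed.
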